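(* Let $\mathcal{A}\in\mathbb{R}^{n_1\times n_2\times n_3}$, let $q\in\mathbb{N}$, and let $\mathcal{B}\in\mathbb{R}^{n_2\times s\times n_3}$. Let $\mathcal{Q}\in\mathbb{R}^{n_1\times m\times n_3}$, with $\mathcal{Q}^\top*\mathcal{Q}=\mathcal{I}$, be an orthonormal basis (the T-QR orthonormal factor) of $$\mathcal{K}=[\mathcal{A}*\mathcal{B},\ (\mathcal{A}*\mathcal{A}^\top)*\mathcal{A}*\mathcal{B},\ldots,(\mathcal{A}*\mathcal{A}^\top)^q*\mathcal{A}*\mathcal{B}].$$ Let $\mathcal{C}=\mathcal{Q}^\top*\mathcal{A}$, let $\mathcal{C}=\mathcal{U}_C*\mathcal{S}_C*\mathcal{V}_C^\top$ be its T-SVD, and let $\widehat{\mathcal{U}}=\mathcal{Q}*\mathcal{U}_C$. For $k\le m$ let $\widehat{\mathcal{U}}_k=\widehat{\mathcal{U}}(:,1:k,:)$ be its first $k$ lateral slices. Then $$\|\mathcal{A}-\widehat{\mathcal{U}}_k*\widehat{\mathcal{U}}_k^\top*\mathcal{A}\|_F^2\le \|\mathcal{A}_k-\mathcal{Q}*\mathcal{Q}^\top*\mathcal{A}_k\|_F^2+\|\mathcal{A}_{k,\perp}\|_F^2.$$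
   Context: For a real tensor $\mathcal{X}\in\mathbb{R}^{n_1\times n_2\times n_3}$ with frontal slices $X^{(k)}$: - $\mathtt{bcirc}(\mathcal{X})$ is the $n_1n_3\times n_2n_3$ block circulant matrix with first block column $X^{(1)},\dots,X^{(n_3)}$. $\mathtt{unfold}$ stacks the frontal slices vertically and $\mathtt{fold}$ inverts it. - The T-product is $\mathcal{X}*\mathcal{Y}=\mathtt{fold}(\mathtt{bcirc}(\mathcal{X})\mathtt{unfold}(\mathcal{Y}))$. - The transpose $\mathcal{X}^\top$ has slices $(X^{(1)})^\top$ and $\mathcal{X}^\top(:,:,k)=(X^{(n_3+2-k)})^\top$ for $k\ge 2$. - $\mathcal{I}$ is the identity tensor (first frontal slice an identity matrix, others zero). Orthogonal tensors $\mathcal{U}$ satisfy $\mathcal{U}^\top*\mathcal{U}=\mathcal{U}*\mathcal{U}^\top=\mathcal{I}$. Powers are repeated T-products. - $[\cdot,\ldots,\cdot]$ is concatenation along the second mode. - $\|\mathcal{X}\|_F$ is the square root of the sum of squared entries. - The T-SVD $\mathcal{X}=\mathcal{U}*\mathcal{S}*\mathcal{V}^\top$ (with $\mathcal{U},\mathcal{V}$ orthogonal and $\mathcal{S}$ f-diagonal, i.e. every frontal slice diagonal) is computed by applying the DFT along the third mode, taking an SVD of each frontal slice with singular values in nonincreasing order, and transforming back. - For $\mathcal{A}=\mathcal{U}*\mathcal{S}*\mathcal{V}^\top$ the tubal-rank-$k$ truncation is $\mathcal{A}_k=\mathcal{U}(:,1:k,:)*\mathcal{S}(1:k,1:k,:)*\mathcal{V}(:,1:k,:)^\top$,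 and $\mathcal{A}_{k,\perp}=\mathcal{A}-\mathcal{A}_k=\mathcal{U}(:,k+1:n_1,:)*\mathcal{S}(k+1:n_1,k+1:n_2,:)*\mathcal{V}(:,k+1:n_2,:)^\top$. *)

From HB Require Import structures.
From mathcomp Require Import all_boot all_order all_algebra.
From mathcomp Require Import reals trigo.
From mathcomp.real_closed Require Import complex.

Set Implicit Arguments.
Unset Strict Implicit.
Unset Printing Implicit Defensive.

Import Order.TTheory GRing.Theory Num.Theory.
Local Open Scope ring_scope.

Definition tensor (R : Type) (n1 n2 n3 : nat) := {ffun 'I_n3 -> 'M[R]_(n1, n2)}.

Section Tensors.
Variable R : realType.

Lemma ord_pos (n : nat) (k : 'I_n) : (0 < n)%N.
Proof. exact: leq_ltn_trans (leq0n k) (ltn_ord k). Qed.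

Definition ordsub (n : nat) (k l : 'I_n) : 'I_n :=
  Ordinal (ltn_pmod (k + n - l) (ord_pos k)).

Definition ordneg (n : nat) (k : 'I_n) : 'I_n :=
  Ordinal (ltn_pmod (n - k) (ord_pos k)).

(* T-product: X * Y = fold (bcirc X * unfold Y); slice k is
   sum_l X^(k - l mod n3) Y^(l). *)
Definition tmul (n1 n2 n4 n3 : nat) (X : tensor R n1 n2 n3) (Y : tensor R n2 n4 n3)
  : tensor R n1 n4 n3 :=
  [ffun k => \sum_(l < n3) (X (ordsub k l) *m Y l)].

Definition ttr (n1 n2 n3 : nat) (X : tensor R n1 n2 n3) : tensor R n2 n1 n3 :=
  [ffun k => (X (ordneg k))^T].

Definition tid (n n3 : nat) : tensor R n n n3 :=
  [ffun k => if val k == 0%N then 1%:M else 0].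

Definition torthogonal (n n3 : nat) (U : tensor R n n n3) : Prop :=
  tmul (ttr U) U = tid n n3 /\ tmul U (ttr U) = tid n n3.

Fixpoint tpow (n n3 : nat) (X : tensor R n n n3) (p : nat) : tensor R n n n3 :=
  match p with
  | 0%N => tid n n3
  | p'.+1 => tmul X (tpow X p')
  end.

Definition tadd (n1 n2 n3 : nat) (X Y : tensor R n1 n2 n3) : tensor R n1 n2 n3 :=
  [ffun k => X k + Y k].
Definition tsub (n1 n2 n3 : nat) (X Y : tensor R n1 n2 n3) : tensor R n1 n2 n3 :=
  [ffun k => X k - Y k].

Definition tfrob (n1 n2 n3 : nat) (X : tensor R n1 n2 n3) : R :=
  Num.sqrt (\sum_(k < n3) \sum_(i < n1) \sum_(j < n2) (X k i j) ^+ 2).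

Definition fdiagonal (n1 n2 n3 : nat) (S : tensor R n1 n2 n3) : Prop :=
  forall k (i : 'I_n1) (j : 'I_n2), val i != val j -> S k i j = 0.

Definition fuppertri (n1 n2 n3 : nat) (S : tensor R n1 n2 n3) : Prop :=
  forall k (i : 'I_n1) (j : 'I_n2), (val j < val i)%N -> S k i j = 0.

Definition tconcat (n1 s n3 p : nat) (F : 'I_p -> tensor R n1 s n3)
  : tensor R n1 (\sum_(j < p) s) n3 :=
  [ffun k => \mxrow_(j < p) (F j k)].

Definition tfirst (n1 m n3 k : nat) (hk : (k <= m)%N) (X : tensor R n1 m n3)
  : tensor R n1 k n3 :=
  [ffun l => \matrix_(i < n1, j < k) X l i (widen_ord hk j)].

(* DFT along the third mode: Xhat^(j) = sum_l w^(j l) X^(l), w = exp(-2 pi i / n3) *)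
Local Open Scope complex_scope.
Definition omega (n3 : nat) : R[i] := cos (2 * pi / n3%:R) -i* sin (2 * pi / n3%:R).

Definition tdft (n1 n2 n3 : nat) (X : tensor R n1 n2 n3) : 'I_n3 -> 'M[R[i]]_(n1, n2) :=
  fun j => \sum_(l < n3) (omega n3 ^+ (j * l)%N) *: map_mx (fun x => x%:C) (X l).
Local Close Scope complex_scope.

(* T-SVD: X = U * S * V^T with U, V orthogonal, S f-diagonal, and in every
   Fourier slice the diagonal entries (singular values) are nonnegative reals in
   nonincreasing order (order of R[i]: z <= w iff w - z is a nonnegative real). *)
Definition is_tsvd (n1 n2 n3 : nat) (X : tensor R n1 n2 n3)
  (U : tensor R n1 n1 n3) (S : tensor R n1 n2 n3) (V : tensor R n2 n2 n3) : Prop :=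
  [/\ torthogonal U, torthogonal V, fdiagonal S,
      X = tmul (tmul U S) (ttr V) &
      forall (f : 'I_n3) (i1 i2 : 'I_n1) (j1 j2 : 'I_n2),
        val i1 = val j1 -> val i2 = val j2 -> (val i1 <= val i2)%N ->
        0 <= tdft S f i2 j2 /\ tdft S f i2 j2 <= tdft S f i1 j1].

(* S restricted to S(1:k, 1:k, :), padded with zeros to its original size;
   U * tmask k S * V^T = U(:,1:k,:) * S(1:k,1:k,:) * V(:,1:k,:)^T *)
Definition tmask (n1 n2 n3 : nat) (k : nat) (S : tensor R n1 n2 n3) : tensor R n1 n2 n3 :=
  [ffun l => \matrix_(i < n1, j < n2) (if (i < k)%N && (j < k)%N then S l i j else 0)].

Definition ttrunc (n1 n2 n3 : nat) (k : nat)
  (U : tensor R n1 n1 n3) (S : tensor R n1 n2 n3) (V : tensor R n2 n2 n3) : tensor R n1 n2 n3 :=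
  tmul (tmul U (tmask k S)) (ttr V).

End Tensors.

From HB Require Import structures.
From mathcomp Require Import all_boot all_order all_algebra.
From mathcomp Require Import reals trigo.
From mathcomp.real_closed Require Import complex.
From mathcomp Require Import ring lra.

(* The DFT along the third mode turns T-products into products of Fourier
   slices and T-transposes into conjugate transposes, and by Parseval it
   multiplies squared Frobenius norms by n3.  So it suffices to prove the
   inequality for each slice, i.e. for complex matrices.  There
   Uk = Q UC(:,1:k) has orthonormal columns, so both sides are Pythagorean:
   the left side is |A|^2 - |Uk^* A|^2, where |Uk^* A|^2 is the sum of the k
   largest squared singular values s_j^2 of C = Q^* A, and the right side is
   |A|^2 - |Q^* Ak|^2.  Finally Q^* Ak = UC SC M P VA^* with M = VC^* VA
   unitary and P the projection on the first k coordinates, so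
   |Q^* Ak|^2 = sum_j s_j^2 w_j with weights 0 <= w_j <= 1 of total at most
   k, which is at most the sum of the k largest s_j^2. *)

Set Implicit Arguments.
Unset Strict Implicit.
Unset Printing Implicit Defensive.

Import Order.TTheory GRing.Theory Num.Theory.
Local Open Scope ring_scope.
Local Open Scope complex_scope.

Section PartialIdentity.
Variable T : pzRingType.

Lemma pid_mx_mulE m n k (A : 'M[T]_(m, n)) i j :
  (pid_mx k *m A) i j = if (i < k)%N then A i j else 0.
Proof.
rewrite mxE (bigD1 i) //= big1 ?addr0 => [|l]; last first.
  by rewrite -val_eqE mxE eq_sym => /negbTE ->; rewrite mul0r.
by rewrite mxE eqxx /=; case: ifP; rewrite ?mul1r ?mul0r.
Qed.

Lemma mul_pid_mxE m n k (A : 'M[T]_(m, n)) i j :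
  (A *m pid_mx k) i j = if (j < k)%N then A i j else 0.
Proof.
rewrite mxE (bigD1 j) //= big1 ?addr0 => [|l]; last first.
  by rewrite -val_eqE mxE => /negbTE ->; rewrite mulr0.
by rewrite mxE eqxx /=; case: ifP; rewrite ?mulr1 ?mulr0.
Qed.

Lemma pid_mx_diag_comm m n k (S : 'M[T]_(m, n)) :
  is_diag_mx S -> pid_mx k *m S = S *m pid_mx k.
Proof.
move=> /is_diag_mxP diagS; apply/matrixP => i j; rewrite pid_mx_mulE mul_pid_mxE.
have [ij | /diagS ->] := eqVneq (i : nat) j; last by rewrite !if_same.
by rewrite ij.
Qed.

Lemma colsub_widen_ord m n k (hk : (k <= n)%N) (A : 'M[T]_(m, n)) :
  colsub (widen_ord hk) A = A *m pid_mx k.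
Proof.
apply/matrixP=> i j; rewrite !mxE (bigD1 (widen_ord hk j)) //= big1 ?addr0.
  by rewrite mxE eqxx /= ltn_ord mulr1.
by move=> l; rewrite mxE -val_eqE /= eq_sym => /negbTE ->; rewrite mulr0.
Qed.

Definition mxmask m n k (S : 'M[T]_(m, n)) : 'M[T]_(m, n) := pid_mx k *m S *m pid_mx k.

Lemma mxmaskE m n k (S : 'M[T]_(m, n)) i j :
  mxmask k S i j = if (i < k)%N && (j < k)%N then S i j else 0.
Proof. by rewrite mul_pid_mxE pid_mx_mulE; case: (i < k)%N; case: (j < k)%N. Qed.

Lemma mxmask_diag m n k (S : 'M[T]_(m, n)) :
  is_diag_mx S -> mxmask k S = S *m pid_mx k.
Proof.
by move=> diagS; rewrite /mxmask pid_mx_diag_comm // -mulmxA mul_pid_mx minnn pid_mx_minh.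
Qed.
End PartialIdentity.

Lemma weighted_sum_le_prefix (F : realFieldType) n k (c w : 'I_n -> F) :
  (forall i j : 'I_n, (i <= j)%N -> c j <= c i) -> (forall j, 0 <= c j) ->
  (forall j, 0 <= w j <= 1) -> \sum_j w j <= \sum_(j < n | (j < k)%N) 1 ->
  \sum_j c j * w j <= \sum_(j < n | (j < k)%N) c j.
Proof.
move=> c_noninc c_ge0 w01; rewrite [X in _ <= X]big_mkcond /= => sum_w.
rewrite [X in _ <= X]big_mkcond /=.
have [n_le_k | k_lt_n] := leqP n k.
  apply: ler_sum => j _; rewrite (leq_trans (ltn_ord j) n_le_k).
  by have := c_ge0 j; have /andP[] := w01 j; nra.
(* Termwise c_j (w_j - [j < k]) <= c_k (w_j - [j < k]), and the excesses sum to <= 0. *)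
pose ck := c (Ordinal k_lt_n).
suff : \sum_j c j * w j - \sum_(j < n) (if (j < k)%N then c j else 0)
       <= ck * (\sum_j w j - \sum_(j < n) (if (j < k)%N then 1 else 0)).
  rewrite -subr_le0 in sum_w.
  have := mulr_ge0_le0 (c_ge0 (Ordinal k_lt_n)) sum_w; rewrite -/ck; lra.
rewrite -!sumrB mulr_sumr; apply: ler_sum => j _; have /andP[w_ge0 w_le1] := w01 j.
case: ifP => j_lt_k.
  have : ck <= c j by apply: c_noninc; rewrite /= ltnW.
  nra.
have : c j <= ck by apply: c_noninc; rewrite /= leqNgt j_lt_k.
nra.
Qed.

Section ComplexMatrices.
Variable R : rcfType.
Local Notation C := R[i].

Definition sqnorm (z : C) : R := complex.Re z ^+ 2 + complex.Im z ^+ 2.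

Lemma mulJc_sqnorm (z : C) : z^*%C * z = (sqnorm z)%:C.
Proof.
case: z => a b; rewrite /sqnorm /GRing.mul /=; apply/eqP; rewrite eq_complex /=.
by apply/andP; split; apply/eqP; ring.
Qed.

Lemma conjcMr_real (z : C) (x : R) : (z * x%:C)^*%C = z^*%C * x%:C.
Proof. by case: z => a b /=; congr Complex; ring. Qed.

Lemma conjc_sum (I : finType) (F : I -> C) : (\sum_i F i)^*%C = \sum_i (F i)^*%C.
Proof. exact: rmorph_sum. Qed.

Lemma sqnorm_ge0 (z : C) : 0 <= sqnorm z.
Proof. by rewrite addr_ge0 ?sqr_ge0. Qed.

Lemma sqnorm0 : sqnorm 0 = 0.
Proof. by rewrite /sqnorm expr0n addr0. Qed.

Lemma sqnormM (a b : C) : sqnorm (a * b) = sqnorm a * sqnorm b.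
Proof. by case: a => a1 a2; case: b => b1 b2; rewrite /sqnorm /=; ring. Qed.

Lemma sqnorm_le (x y : C) : 0 <= x -> x <= y -> sqnorm x <= sqnorm y.
Proof.
rewrite !lecE /= => /andP[/eqP Ix0 Rx_ge0] /andP[/eqP Ixy Rxy].
rewrite /sqnorm Ixy Ix0 expr0n !addr0; nra.
Qed.

Lemma sqnorm_sum_single (I : finType) (a : I -> C) :
  (forall i j, a i != 0 -> a j != 0 -> i = j) ->
  sqnorm (\sum_i a i) = \sum_i sqnorm (a i).
Proof.
move=> single; have [i0 ai0 | a0] := pickP (fun i => a i != 0); last first.
  by rewrite !big1 ?sqnorm0 // => i _; move/negbFE/eqP: (a0 i) => ->; rewrite ?sqnorm0.
have a_eq0 j : j != i0 -> a j = 0.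
  by move=> ji0; apply/eqP; apply: contraNT ji0 => aj; rewrite (single j i0).
rewrite (bigD1 i0) //= big1 ?addr0 => [|j /a_eq0 //].
by rewrite [RHS](bigD1 i0) //= big1 ?addr0 // => j /a_eq0 ->; apply: sqnorm0.
Qed.

Definition ctmx m n (X : 'M[C]_(m, n)) : 'M[C]_(n, m) := (map_mx conjc X)^T.

Lemma ctmxE m n (X : 'M[C]_(m, n)) i j : ctmx X i j = (X j i)^*%C.
Proof. by rewrite !mxE. Qed.

Lemma ctmxM m n p (X : 'M[C]_(m, n)) (Y : 'M[C]_(n, p)) :
  ctmx (X *m Y) = ctmx Y *m ctmx X.
Proof. by rewrite /ctmx map_mxM trmx_mul. Qed.

Lemma ctmxK m n (X : 'M[C]_(m, n)) : ctmx (ctmx X) = X.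
Proof. by apply/matrixP=> i j; rewrite !ctmxE conjcK. Qed.

Lemma ctmxB m n (X Y : 'M[C]_(m, n)) : ctmx (X - Y) = ctmx X - ctmx Y.
Proof. by apply/matrixP=> i j; rewrite !mxE rmorphB. Qed.

Lemma ctmx_pid_mx m n r : ctmx (pid_mx r : 'M[C]_(m, n)) = pid_mx r.
Proof. by rewrite /ctmx map_pid_mx tr_pid_mx. Qed.

Definition frob2 m n (X : 'M[C]_(m, n)) : R := \sum_i \sum_j sqnorm (X i j).
Definition rownorm2 m n (X : 'M[C]_(m, n)) i : R := \sum_j sqnorm (X i j).
Definition colnorm2 m n (X : 'M[C]_(m, n)) j : R := \sum_i sqnorm (X i j).

Lemma colnorm2_ge0 m n (X : 'M[C]_(m, n)) j : 0 <= colnorm2 X j.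
Proof. by apply: sumr_ge0 => i _; apply: sqnorm_ge0. Qed.

Lemma mxtrace_frob2 m n (X : 'M[C]_(m, n)) : \tr (ctmx X *m X) = (frob2 X)%:C.
Proof.
rewrite /mxtrace /frob2 exchange_big rmorph_sum; apply: eq_bigr => j _.
by rewrite mxE rmorph_sum; apply: eq_bigr => i _; rewrite ctmxE mulJc_sqnorm.
Qed.

Lemma frob2_ctmx m n (X : 'M[C]_(m, n)) : frob2 (ctmx X) = frob2 X.
Proof. by apply: complexI; rewrite -!mxtrace_frob2 ctmxK mxtrace_mulC. Qed.

Lemma frob2_mull m n p (U : 'M[C]_(m, n)) (X : 'M[C]_(n, p)) :
  ctmx U *m U = 1%:M -> frob2 (U *m X) = frob2 X.
Proof.
move=> isoU; apply: complexI; rewrite -!mxtrace_frob2 ctmxM -mulmxA.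
by rewrite (mulmxA (ctmx U)) isoU mul1mx.
Qed.

Lemma frob2_mulr_ctmx m n p (V : 'M[C]_(p, n)) (X : 'M[C]_(m, n)) :
  ctmx V *m V = 1%:M -> frob2 (X *m ctmx V) = frob2 X.
Proof. by move=> isoV; rewrite -frob2_ctmx ctmxM ctmxK frob2_mull // frob2_ctmx. Qed.

Lemma frob2_sub_proj m n p (Y : 'M[C]_(m, n)) (Z : 'M[C]_(m, p)) :
  ctmx Y *m Y = 1%:M -> frob2 (Z - Y *m ctmx Y *m Z) = frob2 Z - frob2 (ctmx Y *m Z).
Proof.
move=> isoY.
have gram : ctmx (Z - Y *m ctmx Y *m Z) *m (Z - Y *m ctmx Y *m Z)
            = ctmx Z *m Z - ctmx (ctmx Y *m Z) *m (ctmx Y *m Z).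
  rewrite ctmxB !ctmxM ctmxK mulmxBl !mulmxBr !mulmxA.
  by rewrite -(mulmxA (ctmx Z *m Y) (ctmx Y) Y) isoY mulmx1 (subrr (_ *m Z)) subr0.
by apply: complexI; rewrite rmorphB /= -!mxtrace_frob2 gram raddfB.
Qed.

Lemma frob2_diag_mul m n p (S : 'M[C]_(m, n)) (X : 'M[C]_(n, p)) :
  is_diag_mx S -> frob2 (S *m X) = \sum_j colnorm2 S j * rownorm2 X j.
Proof.
move=> /is_diag_mxP diagS.
have entry i l : sqnorm ((S *m X) i l) = \sum_j sqnorm (S i j) * sqnorm (X j l).
  rewrite mxE sqnorm_sum_single => [|j j']; first by under eq_bigr do rewrite sqnormM.
  have [ij | /diagS ->] := eqVneq (i : nat) j; last by rewrite mul0r eqxx.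
  have [ij' _ _ | /diagS ->] := eqVneq (i : nat) j'; last by rewrite mul0r eqxx.
  by apply: val_inj; rewrite /= -ij -ij'.
rewrite /frob2; under eq_bigr do under eq_bigr do rewrite entry.
under eq_bigr do rewrite exchange_big /=.
rewrite exchange_big; apply: eq_bigr => j _.
by rewrite mulr_suml; apply: eq_bigr => i _; rewrite mulr_sumr.
Qed.

Lemma rownorm2_mul_pid_mx m n k (A : 'M[C]_(m, n)) i :
  rownorm2 (A *m (pid_mx k : 'M_n)) i = \sum_(j < n | (j < k)%N) sqnorm (A i j).
Proof.
rewrite /rownorm2 [RHS]big_mkcond; apply: eq_bigr => j _.
by rewrite mul_pid_mxE; case: ifP; rewrite ?sqnorm0.
Qed.

Lemma frob2_mul_pid_mx m n k (S : 'M[C]_(m, n)) :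
  frob2 (S *m (pid_mx k : 'M_n)) = \sum_(j < n | (j < k)%N) colnorm2 S j.
Proof.
rewrite /frob2 exchange_big [RHS]big_mkcond; apply: eq_bigr => j _.
by case: ifP => j_lt_k; [|rewrite big1 // => i _]; [apply: eq_bigr => i _|];
  rewrite mul_pid_mxE j_lt_k ?sqnorm0.
Qed.

Lemma colnorm2_isometry m n (M : 'M[C]_(m, n)) j :
  ctmx M *m M = 1%:M -> colnorm2 M j = 1.
Proof.
move=> isoM; apply: complexI; have := congr1 (fun X : 'M[C]_n => X j j) isoM.
rewrite !mxE eqxx /= => h; apply: etrans h; rewrite rmorph_sum; apply: eq_bigr => i _.
by rewrite ctmxE mulJc_sqnorm.
Qed.

Lemma rownorm2_coisometry m n (M : 'M[C]_(m, n)) i :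
  M *m ctmx M = 1%:M -> rownorm2 M i = 1.
Proof.
move=> coisoM; apply: complexI; have := congr1 (fun X : 'M[C]_m => X i i) coisoM.
rewrite !mxE eqxx /= => h; apply: etrans h; rewrite rmorph_sum; apply: eq_bigr => j _.
by rewrite ctmxE mulrC mulJc_sqnorm.
Qed.

(* The condition of [is_tsvd] on a Fourier slice: in the order of [R[i]] the
   diagonal entries are nonnegative reals, in nonincreasing order. *)
Definition sorted_diag m n (S : 'M[C]_(m, n)) : Prop :=
  forall (i1 i2 : 'I_m) (j1 j2 : 'I_n), val i1 = val j1 -> val i2 = val j2 ->
    (val i1 <= val i2)%N -> 0 <= S i2 j2 /\ S i2 j2 <= S i1 j1.

Lemma colnorm2_diag m n (S : 'M[C]_(m, n)) (i : 'I_m) (j : 'I_n) :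
  is_diag_mx S -> i = j :> nat -> colnorm2 S j = sqnorm (S i j).
Proof.
move=> /is_diag_mxP diagS ij; rewrite /colnorm2 (bigD1 i) //= big1 ?addr0 // => l li.
by rewrite diagS ?sqnorm0 // -ij; apply: contra li => /eqP/val_inj ->.
Qed.

Lemma colnorm2_diag_out m n (S : 'M[C]_(m, n)) (j : 'I_n) :
  is_diag_mx S -> (m <= j)%N -> colnorm2 S j = 0.
Proof.
move=> /is_diag_mxP diagS m_le_j; rewrite /colnorm2 big1 // => i _.
by rewrite diagS ?sqnorm0 // neq_ltn (leq_trans (ltn_ord i) m_le_j).
Qed.

Lemma colnorm2_nonincreasing m n (S : 'M[C]_(m, n)) :
  is_diag_mx S -> sorted_diag S ->
  forall i j : 'I_n, (i <= j)%N -> colnorm2 S j <= colnorm2 S i.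
Proof.
move=> diagS sortedS i j i_le_j.
have [j_lt_m | m_le_j] := ltnP j m; last by rewrite colnorm2_diag_out ?colnorm2_ge0.
have i_lt_m := leq_ltn_trans i_le_j j_lt_m.
rewrite (colnorm2_diag (i := Ordinal j_lt_m)) // (colnorm2_diag (i := Ordinal i_lt_m)) //.
have [? ?] := sortedS (Ordinal i_lt_m) (Ordinal j_lt_m) i j erefl erefl i_le_j.
exact: sqnorm_le.
Qed.

Section RangeFinderSlice.
Variables (n1 n2 m k : nat) (k_le_m : (k <= m)%N).
Variables (A : 'M[C]_(n1, n2)) (Q : 'M[C]_(n1, m)).
Variables (UA : 'M[C]_n1) (SA : 'M[C]_(n1, n2)) (VA : 'M[C]_n2).
Variables (UC : 'M[C]_m) (SC : 'M[C]_(m, n2)) (VC : 'M[C]_n2).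
Hypotheses (isoQ : ctmx Q *m Q = 1%:M) (isoUA : ctmx UA *m UA = 1%:M).
Hypotheses (isoVA : ctmx VA *m VA = 1%:M) (coisoVA : VA *m ctmx VA = 1%:M).
Hypothesis isoUC : ctmx UC *m UC = 1%:M.
Hypotheses (isoVC : ctmx VC *m VC = 1%:M) (coisoVC : VC *m ctmx VC = 1%:M).
Hypotheses (svdA : A = UA *m SA *m ctmx VA) (diagSA : is_diag_mx SA).
Hypotheses (svdC : ctmx Q *m A = UC *m SC *m ctmx VC) (diagSC : is_diag_mx SC).
Hypothesis sortedSC : sorted_diag SC.

Let Ak := UA *m mxmask k SA *m ctmx VA.
Let Uk := colsub (widen_ord k_le_m) (Q *m UC).
Let M := ctmx VC *m VA.

Lemma frob2_sub_Ak : frob2 (A - Ak) = frob2 A - frob2 Ak.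
Proof.
have split_mask : frob2 SA = frob2 (mxmask k SA) + frob2 (SA - mxmask k SA).
  rewrite /frob2 -[RHS]big_split; apply: eq_bigr => i _; rewrite -[RHS]big_split /=.
  apply: eq_bigr => j _; rewrite [(SA - _) i j]mxE [(- mxmask k SA) i j]mxE mxmaskE.
  by case: ifP => _; rewrite ?subrr ?subr0 ?sqnorm0 ?addr0 ?add0r.
rewrite /Ak svdA -mulmxBl -mulmxBr !(frob2_mulr_ctmx _ isoVA) !(frob2_mull _ isoUA).
by rewrite split_mask; ring.
Qed.

Lemma isometry_Uk : ctmx Uk *m Uk = 1%:M.
Proof.
rewrite /Uk colsub_widen_ord !ctmxM ctmx_pid_mx -!mulmxA (mulmxA (ctmx Q)) isoQ mul1mx.
by rewrite (mulmxA (ctmx UC)) isoUC mul1mx pid_mx_id // pid_mx_1.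
Qed.

Lemma frob2_ctmx_Uk : frob2 (ctmx Uk *m A) = \sum_(j < n2 | (j < k)%N) colnorm2 SC j.
Proof.
rewrite /Uk colsub_widen_ord !ctmxM -!mulmxA svdC !mulmxA.
rewrite -(mulmxA _ (ctmx UC)) isoUC mulmx1 frob2_mulr_ctmx // ctmx_pid_mx.
have iso_pid : ctmx (pid_mx k : 'M[C]_(m, k)) *m pid_mx k = 1%:M.
  by rewrite ctmx_pid_mx pid_mx_id // pid_mx_1.
rewrite -(frob2_mull _ iso_pid) mulmxA mul_pid_mx !minnn.
by rewrite pid_mx_diag_comm // frob2_mul_pid_mx.
Qed.

Lemma frob2_ctmx_Q_Ak :
  frob2 (ctmx Q *m Ak) = \sum_j colnorm2 SC j * rownorm2 (M *m (pid_mx k : 'M_n2)) j.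
Proof.
have AVA : A *m VA = UA *m SA by rewrite svdA -mulmxA isoVA mulmx1.
have -> : Ak = A *m VA *m pid_mx k *m ctmx VA by rewrite /Ak mxmask_diag // AVA !mulmxA.
rewrite !mulmxA svdC (frob2_mulr_ctmx _ isoVA) -!mulmxA (frob2_mull _ isoUC).
by rewrite frob2_diag_mul // /M mulmxA.
Qed.

Lemma frob2_ctmx_Q_Ak_le : frob2 (ctmx Q *m Ak) <= \sum_(j < n2 | (j < k)%N) colnorm2 SC j.
Proof.
have coisoM : M *m ctmx M = 1%:M.
  by rewrite /M ctmxM ctmxK -mulmxA (mulmxA VA) coisoVA mul1mx.
have isoM : ctmx M *m M = 1%:M.
  by rewrite /M ctmxM ctmxK -mulmxA (mulmxA VC) coisoVC mul1mx.
rewrite frob2_ctmx_Q_Ak; apply: weighted_sum_le_prefix.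
- exact: colnorm2_nonincreasing.
- by move=> j; apply: colnorm2_ge0.
- move=> j; rewrite rownorm2_mul_pid_mx sumr_ge0 => [|l _]; last exact: sqnorm_ge0.
  rewrite -(rownorm2_coisometry j coisoM) /rownorm2 [leLHS]big_mkcond.
  by apply: ler_sum => l _; case: ifP => _; rewrite ?sqnorm_ge0.
- under eq_bigr do rewrite rownorm2_mul_pid_mx.
  rewrite exchange_big; apply: ler_sum => l _.
  by rewrite -(colnorm2_isometry l isoM) lexx.
Qed.

Lemma frob2_rangefinder_slice :
  frob2 (A - Uk *m ctmx Uk *m A) <= frob2 (Ak - Q *m ctmx Q *m Ak) + frob2 (A - Ak).
Proof.
rewrite !frob2_sub_proj ?isometry_Uk // frob2_sub_Ak frob2_ctmx_Uk.
have := frob2_ctmx_Q_Ak_le; lra.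
Qed.
End RangeFinderSlice.
End ComplexMatrices.

Section OrdinalArith.
Variable n : nat.
Implicit Types a l x y : 'I_n.

Lemma ord_eq_mod x y : (x = y %[mod n])%N -> x = y.
Proof. by move=> xy; apply: val_inj; rewrite /= -(modn_small (ltn_ord x)) xy modn_small. Qed.

Definition ordadd a l : 'I_n := Ordinal (ltn_pmod (a + l) (ord_pos a)).

Lemma ordsub_addK a l : ordsub (ordadd a l) l = a.
Proof.
apply: ord_eq_mod => /=; rewrite modn_mod -addnBA ?(ltnW (ltn_ord l)) // modnDml.
by rewrite -addnA subnKC ?(ltnW (ltn_ord l)) // modnDr.
Qed.

Lemma ordadd_inj l : injective (ordadd ^~ l).
Proof. by move=> a b eq_ab; rewrite -(ordsub_addK a l) eq_ab ordsub_addK. Qed.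

Lemma ordneg_addn a : (ordneg a + a = 0 %[mod n])%N.
Proof. by rewrite /= modnDml subnK ?modnn ?mod0n // ltnW. Qed.

Lemma ord_eq_modDr x y (z : nat) : (x + z = y + z %[mod n])%N -> x = y.
Proof. by move=> /eqP; rewrite eqn_modDr => /eqP /ord_eq_mod. Qed.

Lemma ordnegK : involutive (@ordneg n).
Proof.
move=> a; apply: (@ord_eq_modDr _ _ (ordneg a)).
by rewrite ordneg_addn addnC ordneg_addn.
Qed.
End OrdinalArith.

Section RootOfUnity.
Variable R : realType.
Local Notation w n := (omega R n).

Lemma omegaX n d :
  w n ^+ d = cos (d%:R * (2 * pi / n%:R)) -i* sin (d%:R * (2 * pi / n%:R)).
Proof.
elim: d => [|d IHd]; first by rewrite expr0 mul0r cos0 sin0 oppr0.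
rewrite exprS IHd /omega; set t := 2 * pi / n%:R.
apply/eqP; rewrite eq_complex /= mulrSr mulrDl mul1r cosD sinD.
by apply/andP; split; apply/eqP; ring.
Qed.

Lemma omega_prim_root n : (0 < n)%N -> n.-primitive_root (w n).
Proof.
move=> n_gt0; apply/andP; split => //; apply/forallP => i; rewrite unity_rootE.
have n0 : n%:R != 0 :> R by rewrite pnatr_eq0 -lt0n.
have [-> | ne_n] := eqVneq i.+1 n.
  rewrite omegaX mulrCA mulrV ?unitfE // mulr1 mulr_natl cos2pi sin2pi oppr0.
  by rewrite !eqxx.
rewrite eqbF_neg omegaX; apply/eqP => /(congr1 (@complex.Re R)) /= cos1.
pose x : R := i.+1%:R * pi / n%:R.
have x_bounds : 0 < x < pi.
  rewrite divr_gt0 ?mulr_gt0 ?pi_gt0 ?ltr0n //= ltr_pdivrMr ?ltr0n //.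
  by rewrite mulrC ltr_pM2l ?pi_gt0 // ltr_nat ltn_neqAle ne_n ltn_ord.
have : cos (x *+ 2) = 1 by rewrite -cos1; congr cos; rewrite /x; field.
rewrite cos_mulr2n cos2sin2; have := sin_gt0_pi x_bounds; nra.
Qed.

Lemma mulJc_omegaX n d : (w n ^+ d)^*%C * w n ^+ d = 1.
Proof. by rewrite rmorphXn -exprMn mulJc_sqnorm /sqnorm /= sqrrN cos2Dsin2 expr1n. Qed.

Lemma conjc_omegaX n (a : 'I_n) j : (w n ^+ (j * a)%N)^*%C = w n ^+ (j * ordneg a)%N.
Proof.
have prim := omega_prim_root (ord_pos a).
have inv : w n ^+ (j * ordneg a)%N * w n ^+ (j * a)%N = 1.
  rewrite -exprD -mulnDr -(prim_expr_mod prim) -modnMmr ordneg_addn mod0n muln0.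
  by rewrite mod0n expr0.
by rewrite -[LHS]mulr1 -inv mulrCA mulJc_omegaX mulr1.
Qed.

Lemma sum_omegaX_orth n (l l' : 'I_n) :
  \sum_(j < n) (w n ^+ (j * l)%N)^*%C * w n ^+ (j * l')%N = (l == l')%:R * n%:R.
Proof.
have prim := omega_prim_root (ord_pos l).
under eq_bigr do rewrite conjc_omegaX -exprD -mulnDr mulnC exprM.
have [<- | ne_ll'] := eqVneq l l'.
  have -> : w n ^+ (ordneg l + l) = 1.
    by apply/eqP; rewrite -(prim_order_dvd prim) /dvdn ordneg_addn mod0n.
  by under eq_bigr do rewrite expr1n; rewrite sumr_const card_ord mul1r.
set z := w n ^+ (ordneg l + l').
have z_ne1 : z != 1.
  rewrite -(prim_order_dvd prim); apply: contra ne_ll' => /eqP dvd.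
  by apply/eqP/(@ord_eq_modDr _ _ _ (ordneg l)); rewrite addnC ordneg_addn addnC dvd mod0n.
have := subrX1 z n; rewrite -exprM mulnC exprM (prim_expr_order prim) expr1n subrr.
by move/esym/eqP; rewrite mulf_eq0 subr_eq0 (negbTE z_ne1) mul0r => /eqP.
Qed.
End RootOfUnity.

Section FourierSlices.
Variable R : realType.
Local Notation w n := (omega R n).

Lemma tdftE n1 n2 n3 (X : tensor R n1 n2 n3) j a b :
  tdft X j a b = \sum_(l < n3) w n3 ^+ (j * l) * (X l a b)%:C.
Proof. by rewrite /tdft summxE; apply: eq_bigr => l _; rewrite !mxE. Qed.

Lemma tmulE n1 n2 n4 n3 (X : tensor R n1 n2 n3) (Y : tensor R n2 n4 n3) k :
  tmul X Y k = \sum_l X (ordsub k l) *m Y l.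
Proof. by rewrite ffunE. Qed.

Lemma tdftB n1 n2 n3 (X Y : tensor R n1 n2 n3) j :
  tdft (tsub X Y) j = tdft X j - tdft Y j.
Proof.
apply/matrixP=> a b; rewrite !mxE !tdftE -sumrB; apply: eq_bigr => l _.
by rewrite ffunE !mxE rmorphB mulrBr.
Qed.

Lemma tdftM n1 n2 n4 n3 (X : tensor R n1 n2 n3) (Y : tensor R n2 n4 n3) j :
  tdft (tmul X Y) j = tdft X j *m tdft Y j.
Proof.
rewrite /tdft mulmx_suml; under [RHS]eq_bigr do rewrite mulmx_sumr.
under [LHS]eq_bigr do rewrite tmulE map_mx_sum scaler_sumr.
rewrite exchange_big [RHS]exchange_big /=; apply: eq_bigr => l _.
rewrite (reindex_inj (@ordadd_inj n3 l)) /=; apply: eq_bigr => a _.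
rewrite ordsub_addK map_mxM -scalemxAl -scalemxAr scalerA -exprD.
congr (_ *: _); apply/eqP.
by rewrite (eq_prim_root_expr (omega_prim_root R (ord_pos a))) /= modnMmr mulnDr.
Qed.

Lemma tdft_ttr n1 n2 n3 (X : tensor R n1 n2 n3) j : tdft (ttr X) j = ctmx (tdft X j).
Proof.
apply/matrixP=> a b; rewrite ctmxE !tdftE rmorph_sum.
rewrite (reindex_inj (can_inj (@ordnegK n3))) /=; apply: eq_bigr => l _.
by rewrite ffunE !mxE ordnegK rmorphM /= oppr0 conjc_omegaX.
Qed.

Lemma tdft_tid n n3 j : tdft (tid R n n3) j = 1%:M.
Proof.
apply/matrixP=> a b; rewrite tdftE (bigD1 (Ordinal (ord_pos j))) //= big1 ?addr0.
  by rewrite ffunE /= muln0 expr0 mul1r !mxE rmorph_nat.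
move=> l l_ne0; rewrite ffunE; case: ifP => [/eqP l0 | _]; last by rewrite mxE mulr0.
by case/eqP: l_ne0; apply: val_inj.
Qed.

Lemma tdft_tfirst n1 m n3 k (hk : (k <= m)%N) (X : tensor R n1 m n3) j :
  tdft (tfirst hk X) j = colsub (widen_ord hk) (tdft X j).
Proof.
by apply/matrixP=> a b; rewrite !mxE !tdftE; apply: eq_bigr => l _; rewrite ffunE mxE.
Qed.

Lemma tdft_tmask n1 n2 n3 k (S : tensor R n1 n2 n3) j :
  tdft (tmask k S) j = mxmask k (tdft S j).
Proof.
apply/matrixP=> a b; rewrite mxmaskE !tdftE; case: ifP => ab_lt_k.
  by apply: eq_bigr => l _; rewrite ffunE mxE ab_lt_k.
by rewrite big1 // => l _; rewrite ffunE mxE ab_lt_k mulr0.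
Qed.

Lemma tdft_diag n1 n2 n3 (S : tensor R n1 n2 n3) j :
  fdiagonal S -> is_diag_mx (tdft S j).
Proof.
move=> diagS; apply/is_diag_mxP => a b ab.
by rewrite tdftE big1 // => l _; rewrite diagS // mulr0.
Qed.

Lemma tdft_isometry m n n3 (U : tensor R m n n3) j :
  tmul (ttr U) U = tid R n n3 -> ctmx (tdft U j) *m tdft U j = 1%:M.
Proof. by move=> isoU; rewrite -tdft_ttr -tdftM isoU tdft_tid. Qed.

Lemma tdft_torthogonal n n3 (U : tensor R n n n3) j :
  torthogonal U ->
  ctmx (tdft U j) *m tdft U j = 1%:M /\ tdft U j *m ctmx (tdft U j) = 1%:M.
Proof. by case=> isoU coisoU; rewrite -tdft_ttr -!tdftM isoU coisoU tdft_tid. Qed.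

Lemma dft_parseval n (x : 'I_n -> R) :
  \sum_(j < n) sqnorm (\sum_(l < n) w n ^+ (j * l) * (x l)%:C) = n%:R * \sum_l x l ^+ 2.
Proof.
apply: complexI; rewrite rmorph_sum rmorphM /= rmorph_nat rmorph_sum mulr_sumr.
under [LHS]eq_bigr do rewrite -mulJc_sqnorm conjc_sum big_distrlr.
rewrite exchange_big; apply: eq_bigr => l _.
rewrite exchange_big (bigD1 l) //= [X in _ + X]big1 ?addr0.
  under eq_bigr do rewrite conjcMr_real mulrACA.
  by rewrite -mulr_suml sum_omegaX_orth eqxx mul1r rmorphXn /= expr2.
move=> l' l'_ne_l; under eq_bigr do rewrite conjcMr_real mulrACA.
by rewrite -mulr_suml sum_omegaX_orth eq_sym (negbTE l'_ne_l) !mul0r.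
Qed.

Lemma tdft_parseval n1 n2 n3 (X : tensor R n1 n2 n3) :
  \sum_(j < n3) frob2 (tdft X j) = n3%:R * tfrob X ^+ 2.
Proof.
rewrite sqr_sqrtr; last by do 3![apply: sumr_ge0 => ? _]; apply: sqr_ge0.
rewrite /frob2 exchange_big [in RHS]exchange_big mulr_sumr; apply: eq_bigr => a _.
rewrite exchange_big [in RHS]exchange_big mulr_sumr; apply: eq_bigr => b _.
by rewrite -dft_parseval; apply: eq_bigr => j _; rewrite tdftE.
Qed.
End FourierSlices.

Local Close Scope complex_scope.
Unset Implicit Arguments.

Theorem theorem3 (R : realType) (n1 n2 n3 q s m k : nat)
  (A : tensor R n1 n2 n3) (B : tensor R n2 s n3) (Q : tensor R n1 m n3)
  (* T-SVD of A, defining A_k and A_{k,perp} *)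
  (UA : tensor R n1 n1 n3) (SA : tensor R n1 n2 n3) (VA : tensor R n2 n2 n3)
  (* T-SVD of C = Q^T * A *)
  (UC : tensor R m m n3) (SC : tensor R m n2 n3) (VC : tensor R n2 n2 n3)
  (hk : (k <= m)%N) :
  let AAt := tmul A (ttr A) in
  let K := tconcat (fun j : 'I_q.+1 => tmul (tmul (tpow AAt j) A) B) in
  (* Q is the orthonormal factor of a T-QR factorization of K *)
  tmul (ttr Q) Q = tid R m n3 ->
  (exists Rf : tensor R m (\sum_(j < q.+1) s) n3, fuppertri Rf /\ K = tmul Q Rf) ->
  is_tsvd A UA SA VA ->
  let C := tmul (ttr Q) A in
  is_tsvd C UC SC VC ->
  let Uhat := tmul Q UC in
  let Uhatk := tfirst hk Uhat in
  let Ak := ttrunc k UA SA VA in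
  let Akperp := tsub A Ak in
  tfrob (tsub A (tmul (tmul Uhatk (ttr Uhatk)) A)) ^+ 2
  <= tfrob (tsub Ak (tmul (tmul Q (ttr Q)) Ak)) ^+ 2 + tfrob Akperp ^+ 2.
Proof.
move=> AAt K isoQ _ [orthUA orthVA diagSA svdA _] C [orthUC orthVC diagSC svdC sortedSC].
cbv zeta; rewrite /ttrunc.
have [n3_0 | n3_gt0] := posnP n3.
  by subst n3; rewrite /tfrob !big_ord0 sqrtr0 expr0n addr0.
have n3_pos : 0 < n3%:R :> R by rewrite ltr0n.
rewrite -(ler_pM2l n3_pos) mulrDr -!tdft_parseval -big_split.
apply: ler_sum => f _; rewrite !(tdftB, tdftM, tdft_ttr, tdft_tfirst, tdft_tmask).
have [isoUA _] := tdft_torthogonal f orthUA.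
have [isoVA coisoVA] := tdft_torthogonal f orthVA.
have [isoUC _] := tdft_torthogonal f orthUC.
have [isoVC coisoVC] := tdft_torthogonal f orthVC.
apply: (frob2_rangefinder_slice hk (tdft_isometry f isoQ) isoUA isoVA coisoVA isoUC
  isoVC coisoVC _ (tdft_diag f diagSA) _ (tdft_diag f diagSC) (sortedSC f)).
- by rewrite svdA !(tdftM, tdft_ttr).
- by rewrite -tdft_ttr -tdftM -/C svdC !(tdftM, tdft_ttr).
Qed.
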